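(* Let $P,Q\in\mathbb{P}$ and suppose $P(\omega^t)>0$ for every cylinder $\omega^t$. If $P$ merges with $Q$, then $Q\ll P$.
   Context: Let $\Omega=\{0,1\}^{\mathbb N}$ (the set of infinite $0$-$1$ sequences, called paths), with the product topology. For $\omega\in\Omega$ and $t\ge 0$, $\omega^t$ denotes the cylinder of length $t$ with base $\omega$, i.e. the set of all paths agreeing with $\omega$ in the first $t$ coordinates ($\omega^0=\Omega$). Fix a $\sigma$-algebra $\Sigma$ of subsets of $\Omega$ containing all cylinders. $\mathbb P$ denotes the set of finitely additive probability measures on $(\Omega,\Sigma)$. For $R\in\mathbb P$, $E\in\Sigma$ and a cylinder $\omega^t$ with $R(\omega^t)>0$, write $R(E\mid\omega^t)=R(E\cap\omega^t)/R(\omega^t)$. For $P,Q\in\mathbb P$, $P$ merges with $Q$ if for every $\varepsilon>0$, $\lim_{t\to\infty} Q\big(\{\omega:\sup_{E\in\Sigma}|P(E\mid\omega^t)-Q(E\mid\omega^t)|>\varepsilon\}\big)=0$ (the set is a union of cylinders of length $t$; cylinders with $Q(\omega^t)=0$ are irrelevant, and a cylinder with $Q(\omega^t)>0=P(\omega^t)$ is counted as belonging to the set). $Q$ is absolutely continuous with respect to $P$, written $Q\ll P$, if for every sequence $(E_n)$ in $\Sigma$, $P(E_n)\to 0$ implies $Q(E_n)\to 0$. *)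

From Stdlib Require Import Reals Lra.
Open Scope R_scope.

Definition Omega := nat -> bool.
Definition event := Omega -> Prop.

Definition cyl (w : Omega) (t : nat) : event :=
  fun v => forall i, (i < t)%nat -> v i = w i.

Definition full : event := fun _ => True.
Definition compl (A : event) : event := fun v => ~ A v.
Definition inter (A B : event) : event := fun v => A v /\ B v.
Definition disjoint (A B : event) : Prop := forall v, ~ (A v /\ B v).
Definition union (A B : event) : event := fun v => A v \/ B v.
Definition bigunion (A : nat -> event) : event := fun v => exists n, A n v.

Record sigma_algebra (S : event -> Prop) : Prop := {
  sa_full : S full;
  sa_compl : forall A, S A -> S (compl A);
  sa_bigunion : forall A : nat -> event, (forall n, S (A n)) -> S (bigunion A)
}.

(* Finitely additive probability measure on (Omega, S); values outside S
   are irrelevant. *)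
Record fa_prob (S : event -> Prop) (m : event -> R) : Prop := {
  fp_nonneg : forall A, S A -> 0 <= m A;
  fp_full : m full = 1;
  fp_add : forall A B, S A -> S B -> disjoint A B -> m (union A B) = m A + m B
}.

Definition cond (m : event -> R) (E : event) (w : Omega) (t : nat) : R :=
  m (inter E (cyl w t)) / m (cyl w t).

(* The set of paths w such that sup_{E in S} |P(E|w^t) - Q(E|w^t)| > eps,
   with the conventions: cylinders with Q(w^t)=0 are left out (irrelevant),
   and cylinders with Q(w^t)>0=P(w^t) are counted in the set. *)
Definition bad_set (S : event -> Prop) (P Q : event -> R) (eps : R) (t : nat)
  : event :=
  fun w => 0 < Q (cyl w t) /\
    (P (cyl w t) = 0 \/
     exists E, S E /\ Rabs (cond P E w t - cond Q E w t) > eps).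

Definition merges (S : event -> Prop) (P Q : event -> R) : Prop :=
  forall eps, eps > 0 -> Un_cv (fun t => Q (bad_set S P Q eps t)) 0.

Definition abs_cont (S : event -> Prop) (Q P : event -> R) : Prop :=
  forall E : nat -> event, (forall n, S (E n)) ->
    Un_cv (fun n => P (E n)) 0 -> Un_cv (fun n => Q (E n)) 0.

(* On a cylinder C of length t where the conditional laws are
   eps-close, Q(A & C) <= Q(C) P(A & C) / P(C) + eps Q(C) <= P(A) / P(C) + eps Q(C);
   on the remaining cylinders Q(A & C) <= Q(C), and these cylinders make up the
   bad set.  Summing over the 2^t cylinders gives
   Q(A) <= Q(bad_t) + K_t P(A) + eps with K_t the sum of the 1 / P(C).  Merging
   makes Q(bad_t) small for some t, and then Q(A) is small whenever P(A) is. *)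
From Stdlib Require Import Reals Lra Lia Classical FunctionalExtensionality PropExtensionality.
Open Scope R_scope.

Lemma event_ext (A B : event) : (forall v, A v <-> B v) -> A = B.
Proof.
  intros H; apply functional_extensionality; intro v.
  apply propositional_extensionality; auto.
Qed.

Section SigmaAlgebra.
Variable S : event -> Prop.
Hypothesis HS : sigma_algebra S.

Lemma sigma_union A B : S A -> S B -> S (union A B).
Proof.
  intros HA HB.
  replace (union A B) with (bigunion (fun n => match n with 0%nat => A | _ => B end)).
  - apply (sa_bigunion _ HS); intros [|n]; auto.
  - apply event_ext; intro v; unfold bigunion, union; split.
    + intros [[|n] H]; auto.
    + intros [H|H]; [exists 0%nat | exists 1%nat]; auto.
Qed.

Lemma sigma_inter A B : S A -> S B -> S (inter A B).
Proof.
  intros HA HB.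
  replace (inter A B) with (compl (union (compl A) (compl B))).
  - apply (sa_compl _ HS), sigma_union; apply (sa_compl _ HS); auto.
  - apply event_ext; intro v; unfold compl, union, inter; split.
    + intros H; split; apply NNPP; intro; apply H; auto.
    + intros [H1 H2] [H|H]; auto.
Qed.

Lemma sigma_empty : S (fun _ => False).
Proof.
  replace (fun _ : Omega => False) with (compl full).
  - apply (sa_compl _ HS), (sa_full _ HS).
  - apply event_ext; intro v; unfold compl, full; tauto.
Qed.

End SigmaAlgebra.

Section MeasureMonotone.
Variables (S : event -> Prop) (m : event -> R).
Hypotheses (HS : sigma_algebra S) (Hm : fa_prob S m).

Lemma measure_mono A B : S A -> S B -> (forall v, A v -> B v) -> m A <= m B.
Proof.
  intros HA HB Hsub.
  assert (HBA : S (inter B (compl A))) by (apply (sigma_inter S HS), (sa_compl _ HS); auto).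
  replace B with (union A (inter B (compl A))).
  - rewrite (fp_add _ _ Hm) by (auto; intros v [H1 [H2 H3]]; auto).
    pose proof (fp_nonneg _ _ Hm _ HBA); lra.
  - apply event_ext; intro v; unfold union, inter, compl; split.
    + intros [H|[H _]]; auto.
    + intros H; destruct (classic (A v)); auto.
Qed.

Lemma measure_le_1 A : S A -> m A <= 1.
Proof.
  intros HA; rewrite <- (fp_full _ _ Hm).
  apply measure_mono; auto; [apply (sa_full _ HS) | intros; exact I].
Qed.

End MeasureMonotone.

Definition set_coord (w : Omega) (t : nat) (b : bool) : Omega :=
  fun i => if Nat.eqb i t then b else w i.

Lemma cyl_set_coord w t b v : cyl (set_coord w t b) (Datatypes.S t) v <-> cyl w t v /\ v t = b.
Proof.
  unfold cyl, set_coord; split.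
  - intros H; split.
    + intros i Hi; rewrite H by lia; destruct (Nat.eqb_spec i t); [lia | auto].
    + rewrite H by lia; rewrite Nat.eqb_refl; auto.
  - intros [H1 H2] i Hi; destruct (Nat.eqb_spec i t); subst; auto; apply H1; lia.
Qed.

Lemma cyl_eq w v t : cyl w t v -> cyl v t = cyl w t.
Proof.
  intros H; apply event_ext; intro u; unfold cyl in *; split;
    intros H' i Hi; rewrite H'; auto; rewrite H; auto.
Qed.

(* [cyl_sum t F] adds F over one base of each cylinder of length t. *)
Fixpoint cyl_sum (t : nat) (F : Omega -> R) : R :=
  match t with
  | 0%nat => F (fun _ => false)
  | Datatypes.S t' => cyl_sum t' (fun w => F (set_coord w t' false) + F (set_coord w t' true))
  end.

Lemma cyl_sum_le t : forall F G, (forall w, F w <= G w) -> cyl_sum t F <= cyl_sum t G.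
Proof.
  induction t; intros F G H; simpl; auto.
  apply IHt; intro w; pose proof (H (set_coord w t false)); pose proof (H (set_coord w t true)); lra.
Qed.

Lemma cyl_sum_ext t F G : (forall w, F w = G w) -> cyl_sum t F = cyl_sum t G.
Proof. intros H; apply Rle_antisym; apply cyl_sum_le; intro w; rewrite H; lra. Qed.

Lemma cyl_sum_ge0 t F : (forall w, 0 <= F w) -> 0 <= cyl_sum t F.
Proof.
  intros H; replace 0 with (cyl_sum t (fun _ => 0)).
  - apply cyl_sum_le; auto.
  - induction t; simpl; auto; rewrite <- IHt; apply cyl_sum_ext; intro; lra.
Qed.

Lemma cyl_sum_add t : forall F G, cyl_sum t (fun w => F w + G w) = cyl_sum t F + cyl_sum t G.
Proof.
  induction t; intros F G; simpl; auto.
  rewrite <- IHt; apply cyl_sum_ext; intro; lra.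
Qed.

Lemma cyl_sum_scal t : forall c F, cyl_sum t (fun w => c * F w) = c * cyl_sum t F.
Proof.
  induction t; intros c F; simpl; auto.
  rewrite <- IHt; apply cyl_sum_ext; intro; lra.
Qed.

(* The n-th base of length t reads the binary digits of n, least significant
   digit at coordinate t - 1. *)
Fixpoint enum_base (t : nat) (n : nat) : Omega :=
  match t with
  | 0%nat => fun _ => false
  | Datatypes.S t' => set_coord (enum_base t' (Nat.div2 n)) t' (Nat.odd n)
  end.

Lemma enum_base_surj t : forall v, exists n, cyl (enum_base t n) t v.
Proof.
  induction t; intros v.
  - exists 0%nat; intros i Hi; lia.
  - destruct (IHt v) as [n Hn].
    exists (if v t then (2 * n + 1)%nat else (2 * n)%nat).
    apply cyl_set_coord; split; destruct (v t).
    + replace (2 * n + 1)%nat with (Datatypes.S (2 * n)) by lia.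
      simpl enum_base; rewrite Nat.div2_succ_double; auto.
    + rewrite Nat.div2_double; auto.
    + rewrite Nat.odd_odd; auto.
    + rewrite Nat.odd_even; auto.
Qed.

Section Measure.
Variables (S : event -> Prop) (m : event -> R).
Hypotheses (HS : sigma_algebra S) (Hm : fa_prob S m) (Hcyl : forall w t, S (cyl w t)).

(* A set that depends only on the first t coordinates is a countable union of
   cylinders of length t. *)
Lemma sigma_cyl_determined t A :
  (forall v w, cyl w t v -> (A v <-> A w)) -> S A.
Proof.
  intros HA.
  replace A with (bigunion (fun n v => A (enum_base t n) /\ cyl (enum_base t n) t v)).
  - apply (sa_bigunion _ HS); intro n.
    destruct (classic (A (enum_base t n))) as [H|H].
    + replace (fun v => A (enum_base t n) /\ cyl (enum_base t n) t v)
        with (cyl (enum_base t n) t) by (apply event_ext; intro v; tauto).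
      auto.
    + replace (fun v => A (enum_base t n) /\ cyl (enum_base t n) t v)
        with (fun _ : Omega => False) by (apply event_ext; intro v; tauto).
      apply sigma_empty; auto.
  - apply event_ext; intro v; unfold bigunion; split.
    + intros [n [H1 H2]]; apply (HA v (enum_base t n)); auto.
    + intros H; destruct (enum_base_surj t v) as [n Hn]; exists n.
      split; auto; apply (HA v (enum_base t n)); auto.
Qed.

Lemma measure_cyl_sum t : forall A, S A -> m A = cyl_sum t (fun w => m (inter A (cyl w t))).
Proof.
  induction t; intros A HA; simpl.
  - f_equal; apply event_ext; intro v; unfold inter, cyl; split; [|tauto].
    intros H; split; auto; intros; lia.
  - rewrite (IHt A HA); apply cyl_sum_ext; intro w.
    rewrite <- (fp_add _ _ Hm); [| apply (sigma_inter S HS); auto .. |].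
    + f_equal; apply event_ext; intro v; unfold union, inter.
      rewrite !cyl_set_coord; destruct (v t); intuition; discriminate.
    + intros v [[_ H1] [_ H2]]; apply cyl_set_coord in H1, H2; destruct H1, H2; congruence.
Qed.

Lemma cyl_sum_measure_cyl t : cyl_sum t (fun w => m (cyl w t)) = 1.
Proof.
  rewrite <- (fp_full _ _ Hm), (measure_cyl_sum t full) by apply (sa_full _ HS).
  apply cyl_sum_ext; intro w; f_equal.
  apply event_ext; intro v; unfold inter, full; tauto.
Qed.

End Measure.

Lemma abs_cont_of_bound S Q P : (forall A, S A -> 0 <= Q A) ->
  (forall eps, eps > 0 -> exists K, 0 <= K /\ forall A, S A -> Q A <= K * P A + eps) ->
  abs_cont S Q P.
Proof.
  intros HQ Hbound E HE HPE eps Heps.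
  destruct (Hbound (eps / 2)) as [K [HK HKA]]; [lra|].
  destruct (HPE (eps / 2 / (K + 1))) as [N HN]; [apply Rdiv_lt_0_compat; lra|].
  exists N; intros n Hn; specialize (HN n Hn); specialize (HKA (E n) (HE n)).
  unfold R_dist in *; rewrite Rminus_0_r in *.
  apply Rabs_def2 in HN as [HN _].
  assert (HKP : K * P (E n) < eps / 2).
  { apply Rle_lt_trans with (K * (eps / 2 / (K + 1))); [apply Rmult_le_compat_l; lra|].
    replace (K * (eps / 2 / (K + 1))) with (eps / 2 - eps / 2 / (K + 1)) by (field; lra).
    assert (0 < eps / 2 / (K + 1)) by (apply Rdiv_lt_0_compat; lra); lra. }
  pose proof (HQ _ (HE n)); rewrite Rabs_right; lra.
Qed.

Section Merging.
Variables (S : event -> Prop) (P Q : event -> R).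
Hypotheses (HS : sigma_algebra S) (Hcyl : forall w t, S (cyl w t))
  (HP : fa_prob S P) (HQ : fa_prob S Q) (HPpos : forall w t, 0 < P (cyl w t)).

Lemma bad_set_cyl eps t v w : cyl w t v -> bad_set S P Q eps t v <-> bad_set S P Q eps t w.
Proof. intros H; unfold bad_set, cond; rewrite (cyl_eq w v t H); tauto. Qed.

Lemma sigma_bad_set eps t : S (bad_set S P Q eps t).
Proof. apply (sigma_cyl_determined S HS Hcyl t); intros; apply bad_set_cyl; auto. Qed.

Lemma measure_inter_good_cyl eps t w A : S A -> ~ bad_set S P Q eps t w ->
  Q (inter A (cyl w t)) <= P A / P (cyl w t) + eps * Q (cyl w t).
Proof.
  intros HA Hgood.
  assert (HAC : S (inter A (cyl w t))) by (apply (sigma_inter S HS); [exact HA | apply Hcyl]).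
  assert (HQAC : Q (inter A (cyl w t)) <= Q (cyl w t))
    by (apply (measure_mono S Q HS HQ); [exact HAC | apply Hcyl | intros v [_ H]; exact H]).
  assert (HPAC : P (inter A (cyl w t)) <= P A)
    by (apply (measure_mono S P HS HP); [exact HAC | exact HA | intros v [H _]; exact H]).
  pose proof (fp_nonneg _ _ HP _ HAC); pose proof (fp_nonneg _ _ HQ _ (Hcyl w t)).
  pose proof (measure_le_1 S Q HS HQ _ (Hcyl w t)).
  pose proof (Rinv_0_lt_compat _ (HPpos w t)).
  unfold cond in Hgood.
  set (C := cyl w t) in *.
  set (x := P (inter A C) / P C).
  assert (HxA : 0 <= x <= P A / P C) by (unfold x, Rdiv; split; nra).
  destruct (Rle_or_lt (Q C) 0) as [HQC | HQC].
  { replace (Q C) with 0 in * by lra; rewrite Rmult_0_r; lra. }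
  assert (Hclose : Rabs (x - Q (inter A C) / Q C) <= eps).
  { apply Rnot_gt_le; intro Hfar; apply Hgood; split; auto; right; exists A; auto. }
  assert (Hx : Q (inter A C) / Q C <= x + eps).
  { rewrite <- Rabs_Ropp in Hclose.
    pose proof (Rle_abs (- (x - Q (inter A C) / Q C))); lra. }
  replace (Q (inter A C)) with (Q C * (Q (inter A C) / Q C)) by (field; lra).
  nra.
Qed.

Lemma measure_inter_cyl_bound eps t w A : 0 <= eps -> S A ->
  Q (inter A (cyl w t)) <=
    Q (inter (bad_set S P Q eps t) (cyl w t)) + P A / P (cyl w t) + eps * Q (cyl w t).
Proof.
  intros Heps HA.
  destruct (classic (bad_set S P Q eps t w)) as [Hbad | Hgood].
  - replace (inter (bad_set S P Q eps t) (cyl w t)) with (cyl w t).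
    + assert (Q (inter A (cyl w t)) <= Q (cyl w t))
        by (apply (measure_mono S Q HS HQ); [apply (sigma_inter S HS) | | intros v [_ H]]; auto).
      pose proof (fp_nonneg _ _ HQ _ (Hcyl w t)).
      pose proof (fp_nonneg _ _ HP A HA); pose proof (HPpos w t).
      pose proof (Rinv_0_lt_compat _ (HPpos w t)).
      assert (0 <= P A / P (cyl w t)) by (unfold Rdiv; nra).
      nra.
    + apply event_ext; intro v; unfold inter; split; [|tauto].
      intros H; split; auto; apply (bad_set_cyl eps t v w H); auto.
  - pose proof (fp_nonneg _ _ HQ _ (sigma_inter S HS _ _ (sigma_bad_set eps t) (Hcyl w t))).
    pose proof (measure_inter_good_cyl eps t w A HA Hgood); lra.
Qed.

Lemma measure_le_bad_set eps t A : 0 <= eps -> S A ->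
  Q A <= Q (bad_set S P Q eps t) + cyl_sum t (fun w => / P (cyl w t)) * P A + eps.
Proof.
  intros Heps HA.
  rewrite (measure_cyl_sum S Q HS HQ Hcyl t A HA).
  eapply Rle_trans; [apply cyl_sum_le; intro w; apply (measure_inter_cyl_bound eps t w A Heps HA)|].
  rewrite !cyl_sum_add, cyl_sum_scal, (cyl_sum_measure_cyl S Q HS HQ Hcyl t).
  rewrite <- (measure_cyl_sum S Q HS HQ Hcyl t _ (sigma_bad_set eps t)).
  rewrite (Rmult_comm _ (P A)), <- cyl_sum_scal.
  unfold Rdiv; lra.
Qed.

End Merging.

Theorem proposition1 (S : event -> Prop) (P Q : event -> R) :
  sigma_algebra S ->
  (forall w t, S (cyl w t)) ->
  fa_prob S P -> fa_prob S Q ->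
  (forall w t, 0 < P (cyl w t)) ->
  merges S P Q ->
  abs_cont S Q P.
Proof.
  intros HS Hcyl HP HQ HPpos Hmerge.
  apply abs_cont_of_bound; [apply (fp_nonneg _ _ HQ)|].
  intros eps Heps.
  destruct (Hmerge (eps / 2) ltac:(lra) (eps / 2) ltac:(lra)) as [t Ht].
  specialize (Ht t (le_n t)); unfold R_dist in Ht; rewrite Rminus_0_r in Ht.
  apply Rabs_def2 in Ht as [Ht _].
  exists (cyl_sum t (fun w => / P (cyl w t))); split.
  - apply cyl_sum_ge0; intro w; left; apply Rinv_0_lt_compat; auto.
  - intros A HA.
    pose proof (measure_le_bad_set S P Q HS Hcyl HP HQ HPpos (eps / 2) t A ltac:(lra) HA).
    lra.
Qed.
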